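(* Let $m,n\ge1$, $1\le r\le mn$, $\mathcal{B}=\mathcal{B}(m,n;r)$ with symmetry group $G$, and fix a division of the grid cells into labelled regions such that every element of $G$ maps each region onto a region (board partitions being taken with respect to it). Suppose $\overline{\mathcal{B}}\subseteq\mathcal{B}$ satisfies: (1) $\overline{\mathcal{B}}$ is a disjoint union of sets $\pi_1,\dots,\pi_t$, each $\pi_i$ being the set of all boards in $\mathcal{B}$ with some fixed board partition; (2) every board of $\mathcal{B}$ is equivalent under $G$ to some board of $\overline{\mathcal{B}}$; (3) any two boards of $\overline{\mathcal{B}}$ that are equivalent under $G$ have the same board partition. Let $K_i=\{g\in G:g\cdot\pi_i=\pi_i\}$. Fix a tiling problem, and for each $i$ let $S_i\subseteq\pi_i$ be the set of boards in $\pi_i$ for which this tiling problem is solvable. Then the total number of boards in $\mathcal{B}(m,n;r)$ for which the tiling problem is solvable is \[\sum_{i=1}^t|S_i|\cdot[G:K_i].\]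
   Context: A grid has $m$ rows and $n$ columns of unit square cells; $\mathcal{B}(m,n;r)$ is the set of all boards, i.e. choices of exactly $r$ blocked cells. Symmetries of the rectangle act on boards; the symmetry group $G$ is $D_4$ (all 8 rotations and reflections of the square) if $m=n>1$, $\langle H,V\rangle=\{R_0,H,V,R_{180}\}$ (identity, reflections across the horizontal and vertical midlines, 180-degree rotation) if $m\neq n$ and $m,n>1$, and $\langle R_{180}\rangle$ if exactly one of $m,n$ is 1. Boards $B,B'$ are equivalent under $G$ if $g\cdot B=B'$ for some $g\in G$. Given a division of the grid into labelled regions, the board partition of a board is the tuple of numbers of blocked cells in each region. A polyomino is a shape made of finitely many edge-connected unit squares; a free polyomino may be rotated and reflected. A tiling problem consists of a prescribed list of free polyominoes whose total number of squares is $mn-r$; a board is solvable for it if the unblocked cells can be exactly covered, without gaps or overlaps, by placing each listed polyomino (in any rotation/reflection) once. *)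

From HB Require Import structures.
From mathcomp Require Import all_boot all_order all_algebra.
From Stdlib Require Import ClassicalEpsilon.
Set Implicit Arguments. Unset Strict Implicit. Unset Printing Implicit Defensive.
Import Order.TTheory GRing.Theory Num.Theory.

Inductive sym := R0 | R90 | R180 | R270 | H | V | D | A.

Definition sym_to_ord (s : sym) : 'I_8 :=
  match s with R0 => @Ordinal 8 0 isT | R90 => @Ordinal 8 1 isT
  | R180 => @Ordinal 8 2 isT | R270 => @Ordinal 8 3 isT
  | H => @Ordinal 8 4 isT | V => @Ordinal 8 5 isT
  | D => @Ordinal 8 6 isT | A => @Ordinal 8 7 isT end.
Definition ord_to_sym (o : 'I_8) : option sym :=
  Some (match val o with 0 => R0 | 1 => R90 | 2 => R180 | 3 => R270
                       | 4 => H | 5 => V | 6 => D | _ => A end)%N.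
Lemma sym_to_ordK : pcancel sym_to_ord ord_to_sym.
Proof. move=> s; case: s; reflexivity. Qed.
HB.instance Definition _ := Finite.copy sym (pcan_type sym_to_ordK).

(* cells of the m x n grid: (row, column) *)
Notation cell m n := ('I_m * 'I_n)%type.

Definition ordd k (d : 'I_k) (x : nat) : 'I_k := insubd d x.

(* Action of a symmetry on the cells (rotations/diagonal reflections are only
   used when m = n, where these formulas are the genuine ones). *)
Definition act m n (g : sym) (c : cell m n) : cell m n :=
  let i := c.1 in let j := c.2 in
  match g with
  | R0 => c
  | R90 => (ordd i j, ordd j (m.-1 - i))
  | R180 => (ordd i (m.-1 - i), ordd j (n.-1 - j))
  | R270 => (ordd i (n.-1 - j), ordd j i)
  | H => (ordd i (m.-1 - i), j)
  | V => (i, ordd j (n.-1 - j))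
  | D => (ordd i j, ordd j i)
  | A => (ordd i (n.-1 - j), ordd j (m.-1 - i))
  end.

Definition symG (m n : nat) : {set sym} :=
  if (m == n) && (1 < m)%N then [set: sym]
  else if (1 < m)%N && (1 < n)%N then [set R0; H; V; R180]
  else [set R0; R180].

(* boards: sets of exactly r blocked cells *)
Definition boards m n r : {set {set cell m n}} := [set B : {set cell m n} | #|B| == r].

Definition bact m n (g : sym) (B : {set cell m n}) : {set cell m n} :=
  [set act g c | c in B].

Definition region m n k (reg : cell m n -> 'I_k) (a : 'I_k) : {set cell m n} :=
  [set c | reg c == a].

Definition regions_respected m n k (reg : cell m n -> 'I_k) : Prop :=
  forall g, g \in symG m n -> forall a : 'I_k,
    exists b : 'I_k, bact g (region reg a) = region reg b.

Definition bpart m n k (reg : cell m n -> 'I_k) (B : {set cell m n}) : {ffun 'I_k -> nat} :=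
  [ffun a => #|B :&: region reg a|].

Definition piset m n r k (reg : cell m n -> 'I_k) (p : {ffun 'I_k -> nat})
  : {set {set cell m n}} := [set B in boards m n r | bpart reg B == p].

Definition stabK m n (P : {set {set cell m n}}) : {set sym} :=
  [set g in symG m n | [set bact g B | B in P] == P].
Definition index_in (G K : {set sym}) : nat := (#|G| %/ #|K|)%N.

Definition zcell := (int * int)%type.

Definition adjz (x y : zcell) : bool :=
  ((`|x.1 - y.1| + `|x.2 - y.2|)%R == 1%R).

Definition polyomino (P : seq zcell) : Prop :=
  P != [::] /\ uniq P /\
  (forall X : zcell -> Prop,
     (exists2 x, x \in P & X x) ->
     (forall x y, x \in P -> y \in P -> adjz x y -> X x -> X y) ->
     forall x, x \in P -> X x).

Definition transz (s : sym) (z : zcell) : zcell :=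
  let x := z.1 in let y := z.2 in
  match s with
  | R0 => (x, y) | R90 => (- y, x)%R | R180 => (- x, - y)%R | R270 => (y, - x)%R
  | H => (x, - y)%R | V => (- x, y)%R | D => (y, x) | A => (- y, - x)%R
  end.

Definition place (s : sym) (d : zcell) (P : seq zcell) : seq zcell :=
  map (fun z => let w := transz s z in (w.1 + d.1, w.2 + d.2)%R) P.

Definition cellZ m n (c : cell m n) : zcell := (Posz (val c.1), Posz (val c.2)).

(* board B is solvable for the tiling problem Ps: each listed polyomino is
   placed once (rotated/reflected and translated), without overlaps, covering
   exactly the unblocked cells. *)
Definition solvable m n (Ps : seq (seq zcell)) (B : {set cell m n}) : Prop :=
  exists pl : seq (sym * zcell),
    size pl = size Ps /\
    let cells := flatten (map (fun xp => place xp.1.1 xp.1.2 xp.2) (zip pl Ps)) in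
    uniq cells /\
    (forall z, z \in cells <-> exists c, c \notin B /\ z = cellZ c).

Definition solvableb m n (Ps : seq (seq zcell)) (B : {set cell m n}) : bool :=
  if excluded_middle_informative (solvable Ps B) then true else false.

From Pilot Require Import Defs.
From HB Require Import structures.
From mathcomp Require Import all_boot all_order all_algebra all_fingroup.
From mathcomp Require Import zify.
From Stdlib Require Import ClassicalEpsilon.
Import Order.TTheory GRing.Theory Num.Theory.
Set Implicit Arguments. Unset Strict Implicit. Unset Printing Implicit Defensive.

(* A tiling moves rigidly with the board,
   so G preserves solvability; and since G permutes the regions, it maps boards
   with equal board partitions to boards with equal board partitions.  Hence an
   element of G mapping one board of pi_i into pi_i stabilises pi_i, and by (3)
   the translates g pi_i (over all i and g in G) that contain a given board all
   coincide; by (2) every board lies in one of them.  Each translate of pi_i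
   contains |S_i| solvable boards, and pi_i has [G : K_i] distinct translates by
   the orbit-stabiliser theorem. *)

(** * The dihedral group *)

(* [dihedral k f] is H^f followed by R90^k. *)
Definition dihedral (k : nat) (f : bool) : sym :=
  nth R0 (if f then [:: H; D; V; A] else [:: R0; R90; R180; R270]) (k %% 4).
Definition rot_part (g : sym) : nat :=
  match g with R0 | H => 0 | R90 | D => 1 | R180 | V => 2 | R270 | A => 3 end.
Definition is_refl (g : sym) : bool :=
  match g with H | V | D | A => true | _ => false end.

(* [sym_mul g h] is g followed by h, so that the actions below are right
   actions, as MathComp's [action] requires; the rotation part of the product
   uses that H conjugates R90 to its inverse. *)
Definition sym_mul (g h : sym) : sym :=
  dihedral (rot_part h + (if is_refl h then 4 - rot_part g else rot_part g))
           (is_refl g (+) is_refl h).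
Definition sym_inv (g : sym) : sym :=
  match g with R90 => R270 | R270 => R90 | _ => g end.

Lemma sym_mulA : associative sym_mul.
Proof. by do 3!case. Qed.
Lemma sym_mul1g : left_id R0 sym_mul.
Proof. by case. Qed.
Lemma sym_mulVg : left_inverse R0 sym_inv sym_mul.
Proof. by case. Qed.

HB.instance Definition _ := Finite_isGroup.Build sym sym_mulA sym_mul1g sym_mulVg.

Lemma symG_group_set m n : group_set (symG m n).
Proof.
apply/group_setP; rewrite /symG; split.
  by case: ifP; rewrite ?inE //; case: ifP; rewrite !inE.
by case: ifP => _; [|case: ifP => _]; do 2!case; rewrite !inE.
Qed.
Canonical symG_group m n : {group sym} := Group (symG_group_set m n).

Definition klein4 : {set sym} := [set R0; H; V; R180].

Lemma symG_square m n g : g \in symG m n -> g \notin klein4 -> m = n.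
Proof.
by rewrite /symG; case: eqP => // _; case: ifP => _; case: g; rewrite !inE.
Qed.

(** * The action on the grid *)

Definition affz (s : sym) (d z : zcell) : zcell :=
  let w := transz s z in (w.1 + d.1, w.2 + d.2)%R.

Lemma transzM s l z : transz (s * l)%g z = transz l (transz s z).
Proof. by case: z => x y; case: s; case: l; rewrite /= ?opprK. Qed.

Lemma affzM s d l e z : affz l e (affz s d z) = affz (s * l)%g (affz l e d) z.
Proof.
rewrite /affz transzM; case: (transz s z) d e => x y [d1 d2] [e1 e2].
by case: l => /=; congr pair; lia.
Qed.

Lemma transz_inj s : injective (transz s).
Proof. by move=> [x y] [x' y']; case: s => /= -[ex ey]; congr pair; lia. Qed.

Lemma affz_inj s d : injective (affz s d).
Proof.
move=> z z' [e1 e2]; apply: (@transz_inj s).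
by move: e1 e2; case: (transz s z) (transz s z') => x y [x' y'] /= e1 e2; congr pair; lia.
Qed.

(* [act] names rotations in the opposite sense to [transz] and exchanges the
   names H and V. *)
Definition cell_lin (g : sym) : sym :=
  match g with R90 => R270 | R270 => R90 | H => V | V => H | _ => g end.

Definition cell_offset m n (g : sym) : zcell :=
  match g with
  | R0 | D => (0, 0)%R | R90 => (0%R, Posz m.-1) | R180 => (Posz m.-1, Posz n.-1)
  | R270 => (Posz n.-1, 0%R) | H => (Posz m.-1, 0%R) | V => (0%R, Posz n.-1)
  | A => (Posz n.-1, Posz m.-1) end.

Lemma cellZ_inj m n : injective (@cellZ m n).
Proof. by move=> [i j] [i' j'] [/val_inj-> /val_inj->]. Qed.

Ltac ordd_arith := rewrite /cellZ /affz /=; congr pair;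
  rewrite ?val_insubd; repeat case: ifP => ?; lia.

Lemma cellZ_act m n g (c : cell m n) : g \in symG m n ->
  cellZ (Defs.act g c) = affz (cell_lin g) (cell_offset m n g) (cellZ c).
Proof.
case: c => i j gG; have lti := ltn_ord i; have ltj := ltn_ord j.
have [Kg|nKg] := boolP (g \in klein4).
  by move: Kg {gG}; rewrite !inE; case: g => // _; ordd_arith.
have mn := symG_square gG nKg; subst n.
by case: g {gG nKg}; ordd_arith.
Qed.

Lemma cell_linM g h : cell_lin (g * h)%g = (cell_lin g * cell_lin h)%g.
Proof. by case: g; case: h. Qed.

Lemma cell_offsetM m n g h : g \in symG m n -> h \in symG m n ->
  cell_offset m n (g * h)%g = affz (cell_lin h) (cell_offset m n h) (cell_offset m n g).
Proof.
move=> gG hG; have [/andP[Kg Kh]|] := boolP ((g \in klein4) && (h \in klein4)).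
  move: Kg Kh {gG hG}; rewrite !inE.
  by case: g; case: h => // _ _; rewrite /affz /=; congr pair; lia.
case/nandP => [/(symG_square gG)|/(symG_square hG)] mn; subst n;
  by case: g {gG}; case: h {hG}; rewrite /affz /=; congr pair; lia.
Qed.

Lemma grid_actM m n g h (c : cell m n) : g \in symG m n -> h \in symG m n ->
  Defs.act (g * h)%g c = Defs.act h (Defs.act g c).
Proof.
move=> gG hG; apply: cellZ_inj.
by rewrite !cellZ_act ?groupM // affzM cell_linM cell_offsetM.
Qed.

Lemma grid_act_inj m n g : g \in symG m n -> injective (@Defs.act m n g).
Proof.
by move=> gG c c' /(congr1 (@cellZ m n)); rewrite !cellZ_act // => /affz_inj/cellZ_inj.
Qed.

Section CellAction.
Variables m n : nat.

(* Outside symG the formulas of [act] need not be injective, so there the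
   group acts trivially. *)
Definition cell_act (c : cell m n) (g : sym) : cell m n :=
  if g \in symG m n then Defs.act g c else c.

Lemma cell_act_is_action : is_action (symG m n) cell_act.
Proof.
split=> [g c c'|c g h gG hG]; rewrite /cell_act.
  by case: ifP => // gG; apply: grid_act_inj.
by rewrite groupM // gG hG grid_actM.
Qed.

Canonical cell_action : action (symG m n) (cell m n) := Action cell_act_is_action.

Definition board_action : action (symG m n) {set cell m n} := (cell_action^*)%act.

Lemma board_actE g B : g \in symG m n -> board_action B g = bact g B.
Proof. by move=> gG; apply: eq_imset => c; rewrite /= /cell_act gG. Qed.

End CellAction.

(** * Invariance of solvability *)

Definition tiling_cells (pl : seq (sym * zcell)) (Ps : seq (seq zcell)) : seq zcell :=
  flatten [seq place xp.1.1 xp.1.2 xp.2 | xp <- zip pl Ps].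

Definition move_placement (l : sym) (e : zcell) (x : sym * zcell) : sym * zcell :=
  ((x.1 * l)%g, affz l e x.2).

Lemma tiling_cells_move l e pl Ps :
  tiling_cells (map (move_placement l e) pl) Ps = map (affz l e) (tiling_cells pl Ps).
Proof.
rewrite /tiling_cells; elim: pl Ps => [|[s d] pl IH] [|Q Qs] //=.
rewrite map_cat IH -map_comp; congr (_ ++ _); apply: eq_map => z /=.
by rewrite affzM.
Qed.

Lemma solvable_act m n Ps g (B : {set cell m n}) : g \in symG m n ->
  solvable Ps B -> solvable Ps (bact g B).
Proof.
move=> gG [pl [size_pl [uniq_cells cover]]].
pose l := cell_lin g; pose e := cell_offset m n g.
exists (map (move_placement l e) pl); split; first by rewrite size_map.
rewrite -/(tiling_cells _ _) tiling_cells_move; split.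
  by rewrite map_inj_uniq //; apply: affz_inj.
move=> z; split.
  case/mapP=> w /cover[c [cB ->]] ->; exists (Defs.act g c).
  split; last by rewrite cellZ_act.
  by rewrite /bact mem_imset //; apply: grid_act_inj.
case=> c [cB ->]; rewrite -[c](actKVin (cell_action m n) gG) /= /cell_act groupV gG.
rewrite cellZ_act // map_f //; apply/cover; exists (Defs.act g^-1%g c); split=> //.
by apply: contra cB => /(imset_f (Defs.act g)); rewrite -grid_actM ?groupV // mulVg.
Qed.

Lemma solvableP m n Ps (B : {set cell m n}) : reflect (solvable Ps B) (solvableb Ps B).
Proof. by rewrite /solvableb; case: excluded_middle_informative => h; constructor. Qed.

Lemma solvableb_act m n Ps g (B : {set cell m n}) : g \in symG m n ->
  solvableb Ps B -> solvableb Ps (bact g B).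
Proof. by move=> gG /solvableP/(solvable_act gG)/solvableP. Qed.

(** * Translates of the classes of boards *)

Section SetAction.
Variables (aT : finGroupType) (D : {set aT}) (rT : finType) (to : action D rT).

Lemma setactI A S a : to^* (A :&: S) a = to^* A a :&: to^* S a.
Proof. by rewrite !setactE imsetI //; apply: in2W; apply: act_inj. Qed.

Lemma setactMin S : {in D &, forall a b, to^* S (a * b) = to^* (to^* S a) b}.
Proof. exact: actMin (to^*)%act S. Qed.

Lemma setact_sub_eq S a : to^* S a \subset S -> to^* S a = S.
Proof. by move=> sSa; apply/eqP; rewrite eqEcard sSa card_setact leqnn. Qed.

End SetAction.

Definition translates m n (P : {set {set cell m n}}) : {set {set {set cell m n}}} :=
  [set (board_action m n)^* P g | g in symG m n].

Section Boards.
Variables m n : nat.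
Local Notation G := (symG m n).
Implicit Types (B : {set cell m n}) (P : {set {set cell m n}}).

Lemma boards_act r g B : g \in G -> B \in boards m n r -> bact g B \in boards m n r.
Proof. by move=> gG; rewrite !inE -board_actE // card_setact. Qed.

Lemma stabK_astab1 P : stabK P = 'C_G[P | (board_action m n)^*]%g.
Proof.
apply/setP=> g; rewrite !inE sub1set inE andbA andbb; case gG: (g \in G) => //=.
by rewrite (@eq_in_imset _ _ _ (board_action m n ^~ g)) // => B _; rewrite board_actE.
Qed.

Lemma card_translates P : #|translates P| = index_in G (stabK P).
Proof. by rewrite /index_in stabK_astab1 divgS ?subsetIl // -card_orbit_in. Qed.

Variables (r k : nat) (reg : cell m n -> 'I_k).

Lemma bpart_piset q B : B \in piset r reg q -> bpart reg B = q.
Proof. by rewrite inE => /andP[_ /eqP]. Qed.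

Hypothesis reg_respected : regions_respected reg.

Lemma bpart_act g B B' : g \in G ->
  bpart reg B = bpart reg B' -> bpart reg (bact g B) = bpart reg (bact g B').
Proof.
move=> gG eqB; apply/ffunP=> b; rewrite !ffunE.
have [a Ea] := reg_respected (groupVr gG) b.
have -> : region reg b = bact g (region reg a).
  by rewrite -Ea -!board_actE ?groupV // actKVin.
rewrite -!board_actE // -!setactI !card_setact.
by move/ffunP/(_ a): eqB; rewrite !ffunE.
Qed.

Lemma piset_stab q g B : g \in G -> B \in piset r reg q -> bact g B \in piset r reg q ->
  (board_action m n)^* (piset r reg q) g = piset r reg q.
Proof.
move=> gG Bq gBq; apply: setact_sub_eq; apply/subsetP=> _ /imsetP[B' B'q ->].
have B'b : B' \in boards m n r by move: B'q; rewrite inE => /andP[].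
have eqB : bpart reg B' = bpart reg B by rewrite (bpart_piset Bq) (bpart_piset B'q).
by rewrite board_actE // inE boards_act //= (bpart_act gG eqB) (bpart_piset gBq).
Qed.

End Boards.

Lemma card_sum_cover (T I : finType) (F : I -> {set {set T}}) (S : {set T}) :
  (forall x, x \in S -> exists i, exists2 X, X \in F i & x \in X) ->
  (forall x i j X Y, X \in F i -> Y \in F j -> x \in X -> x \in Y -> i = j /\ X = Y) ->
  #|S| = (\sum_i \sum_(X in F i) #|S :&: X|)%N.
Proof.
move=> cover cover_uniq.
have cardSI X : #|S :&: X| = (\sum_(x in S) (x \in X))%N.
  rewrite -sum1_card (eq_bigl (fun x => (x \in S) && (x \in X))) => [|x]; last first.
    by rewrite inE.
  by rewrite big_mkcondr; apply: eq_bigr => x _; case: (x \in X).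
transitivity (\sum_(x in S) \sum_i \sum_(X in F i) (x \in X))%N; last first.
  rewrite exchange_big; apply: eq_bigr => i _.
  by rewrite exchange_big; apply: eq_bigr => X _; rewrite cardSI.
rewrite -sum1_card; apply: eq_bigr => x xS.
have [i0 [X0 X0F xX0]] := cover x xS.
have notin i X : X \in F i -> (i != i0) || (X != X0) -> (x \in X) = false.
  move=> XF; apply: contraTF => xX; have [-> ->] := cover_uniq _ _ _ _ _ XF X0F xX xX0.
  by rewrite !eqxx.
have rest_i0 : (\sum_(X in F i0 | X != X0) (x \in X))%N = 0%N.
  by apply: big1 => X /andP[XF neX]; rewrite (notin _ _ XF) ?neX ?orbT.
have rest : (\sum_(i | i != i0) \sum_(X in F i) (x \in X))%N = 0%N.
  by apply: big1 => i nei; apply: big1 => X XF; rewrite (notin _ _ XF) ?nei.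
by rewrite (bigD1 i0) // (bigD1 X0) //= xX0 rest_i0 rest.
Qed.

Section Counting.
Variables (m n r k t : nat) (reg : cell m n -> 'I_k).
Variables (Bbar : {set {set cell m n}}) (p : 'I_t -> {ffun 'I_k -> nat}).
Local Notation G := (symG m n).
Local Notation pi i := (piset r reg (p i)).

Hypothesis reg_respected : regions_respected reg.
Hypothesis Bbar_def : Bbar = \bigcup_(i < t) pi i.
Hypothesis pi_disjoint : forall i j, i != j -> [disjoint pi i & pi j].
Hypothesis Bbar_meets_orbits :
  forall B, B \in boards m n r -> exists2 g, g \in G & bact g B \in Bbar.
Hypothesis bpart_orbit_const : forall B B', B \in Bbar -> B' \in Bbar ->
  (exists2 g, g \in G & bact g B = B') -> bpart reg B = bpart reg B'.

Lemma translates_cover B :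
  B \in boards m n r -> exists i, exists2 X, X \in translates (pi i) & B \in X.
Proof.
case/Bbar_meets_orbits=> g gG; rewrite Bbar_def => /bigcupP[i _ gBi].
exists i, ((board_action m n)^* (pi i) g^-1)%g; first by rewrite imset_f ?groupV.
by rewrite -(actKin (board_action m n) gG B) mem_setact // board_actE.
Qed.

Lemma translates_uniq B i j X Y : X \in translates (pi i) -> Y \in translates (pi j) ->
  B \in X -> B \in Y -> i = j /\ X = Y.
Proof.
case/imsetP=> g gG ->; case/imsetP=> h hG -> /imsetP[B1 B1i ->] /imsetP[B2 B2j].
pose x := (g * h^-1)%g; have xG : x \in G by rewrite groupM ?groupV.
move=> /(congr1 (board_action m n ^~ h^-1)%g); rewrite !actKin // -actMin ?groupV //.
rewrite board_actE // => xB12.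
have in_Bbar l B' : B' \in pi l -> B' \in Bbar.
  by rewrite Bbar_def => B'l; apply/bigcupP; exists l.
have p_ij : p i = p j.
  rewrite -(bpart_piset B1i) -(bpart_piset B2j).
  by apply: bpart_orbit_const; [apply: in_Bbar B1i | apply: in_Bbar B2j | exists x].
have ij : i = j.
  case: (eqVneq i j) => // /pi_disjoint; rewrite p_ij => /disjointFr/(_ B2j).
  by rewrite B2j.
subst j; split=> //.
have stab : (board_action m n)^* (pi i) x = pi i.
  by apply: (piset_stab reg_respected xG B1i); rewrite xB12.
by rewrite -(mulgVK h g) setactMin ?groupV // stab.
Qed.

Lemma card_solvable_translate Ps i X : X \in translates (pi i) ->
  #|[set B in boards m n r | solvableb Ps B] :&: X| = #|[set B in pi i | solvableb Ps B]|.
Proof.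
set Sol := [set B in _ | _]; case/imsetP=> g gG ->.
have Sol_inv : (board_action m n)^* Sol g = Sol.
  apply: setact_sub_eq; apply/subsetP=> _ /imsetP[B + ->].
  rewrite board_actE // => /setIdP[Bb Bs].
  by apply/setIdP; split; [apply: boards_act | apply: solvableb_act].
rewrite -{1}Sol_inv -setactI card_setact; apply: eq_card => B; rewrite !inE.
by case: (#|B| == r); case: (solvableb Ps B); case: (bpart reg B == p i).
Qed.

End Counting.

Theorem corollary3p2 (m n r k t : nat) (reg : 'I_m * 'I_n -> 'I_k)
  (Bbar : {set {set 'I_m * 'I_n}}) (p : 'I_t -> {ffun 'I_k -> nat})
  (Ps : seq (seq zcell)) :
  (0 < m)%N -> (0 < n)%N -> (1 <= r <= m * n)%N ->
  regions_respected reg ->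
  Bbar \subset boards m n r ->
  Bbar = \bigcup_(i < t) piset r reg (p i) ->
  (forall i j : 'I_t, i != j ->
     [disjoint piset r reg (p i) & piset r reg (p j)]) ->
  (forall B, B \in boards m n r -> exists2 g, g \in symG m n & bact g B \in Bbar) ->
  (forall B B', B \in Bbar -> B' \in Bbar ->
     (exists2 g, g \in symG m n & bact g B = B') -> bpart reg B = bpart reg B') ->
  (forall P, P \in Ps -> polyomino P) ->
  sumn (map size Ps) = (m * n - r)%N ->
  #|[set B in boards m n r | solvableb Ps B]| =
  (\sum_(i < t) #|[set B in piset r reg (p i) | solvableb Ps B]|
       * index_in (symG m n) (stabK (piset r reg (p i))))%N.
Proof.
move=> _ _ _ reg_respected _ Bbar_def pi_disjoint meets_orbits bpart_const _ _.
rewrite (@card_sum_cover _ _ (fun i => translates (piset r reg (p i)))) => [|B|B i j X Y].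
- apply: eq_bigr => i _; rewrite -card_translates mulnC -sum_nat_const.
  by apply: eq_bigr => X; apply: card_solvable_translate.
- by case/setIdP=> Bb _; apply: (translates_cover Bbar_def meets_orbits Bb).
- exact: (translates_uniq reg_respected Bbar_def pi_disjoint bpart_const).
Qed.
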